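(* Let $n\ge1$, $0\le c_0<c_1<\dots<c_n$, $v_0\ge v_1\ge\dots\ge v_n>0$. (1) Let $A=(a_{jk})_{j,k=0}^n$ with $a_{jk}=v_k-c_k$ if $j>k$, $a_{kk}=\frac{v_k}{2}-c_k$, $a_{jk}=-c_j$ if $j<k$. (2) Let $0\le\rho_k<\frac{v_k}{2}$ for $k=0,\dots,n$ and let $B=(b_{jk})_{j,k=0}^n$ with $b_{jk}=v_k-c_k$ if $j>k$, $b_{kk}=\frac{v_k}{2}-c_k-\rho_k$, $b_{jk}=-c_j$ if $j<k$. For each of these pay-off matrices there exists a unique ESS, and the pay-off matrix is conditionally negative definite.
   Context: Strategies are indexed $0,\dots,n$; the set of mixed strategies is $\overline\Delta=\{\mathbf{q}\in[0,1]^{n+1}:\sum_j q_j=1\}$. For a matrix $M$, $\mathbf{p}\in\overline\Delta$ is an ESS for $M$ if (i) $\mathbf{p}^TM\mathbf{p}\ge\mathbf{q}^TM\mathbf{p}$ for all $\mathbf{q}\in\overline\Delta$ and (ii) whenever $\mathbf{q}\ne\mathbf{p}$ and $\mathbf{p}^TM\mathbf{p}=\mathbf{q}^TM\mathbf{p}$, then $\mathbf{p}^TM\mathbf{q}>\mathbf{q}^TM\mathbf{q}$. $M\in\mathbb{R}^{(n+1)\times(n+1)}$ is conditionally negative definite if $\mathbf{y}^TM\mathbf{y}<0$ for all nonzero $\mathbf{y}\in\mathbb{R}^{n+1}$ with $\sum_j y_j=0$. *)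

(* Strategies 0..n are indexed by 'I_(n.+1). *)
From HB Require Import structures.
From mathcomp Require Import all_boot all_order all_algebra.
From mathcomp Require Import reals.
Set Implicit Arguments. Unset Strict Implicit. Unset Printing Implicit Defensive.
Import Order.TTheory GRing.Theory Num.Theory.
Local Open Scope ring_scope.

Section Defs.
Variable R : realType.

Definition mixed_strategy (n : nat) (q : 'cV[R]_(n.+1)) : Prop :=
  (forall j, 0 <= q j 0 <= 1) /\ \sum_j q j 0 = 1.

Definition bil (n : nat) (p : 'cV[R]_(n.+1)) (M : 'M[R]_(n.+1))
  (q : 'cV[R]_(n.+1)) : R := (p^T *m M *m q) 0 0.

Definition is_ESS (n : nat) (M : 'M[R]_(n.+1)) (p : 'cV[R]_(n.+1)) : Prop :=
  mixed_strategy p /\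
  (forall q, mixed_strategy q -> bil q M p <= bil p M p) /\
  (forall q, mixed_strategy q -> q <> p -> bil p M p = bil q M p ->
     bil q M q < bil p M q).

Definition cond_neg_def (n : nat) (M : 'M[R]_(n.+1)) : Prop :=
  forall y : 'cV[R]_(n.+1), y != 0 -> \sum_j y j 0 = 0 -> bil y M y < 0.

Definition payoffA (n : nat) (c v : 'I_(n.+1) -> R) : 'M[R]_(n.+1) :=
  \matrix_(j, k) (if (k < j)%N then v k - c k
                  else if j == k then v k / 2 - c k else - c j).

Definition payoffB (n : nat) (c v rho : 'I_(n.+1) -> R) : 'M[R]_(n.+1) :=
  \matrix_(j, k) (if (k < j)%N then v k - c k
                  else if j == k then v k / 2 - c k - rho k else - c j).
End Defs.

From HB Require Import structures.
From mathcomp Require Import all_boot all_order all_algebra.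
From mathcomp Require Import reals.
From mathcomp Require Import ring lra zify.
Set Implicit Arguments. Unset Strict Implicit. Unset Printing Implicit Defensive.
Import Order.TTheory GRing.Theory Num.Theory.
Local Open Scope ring_scope.

(* The symmetric part of payoffB is the kernel D (minn j k) - (j == k) rho j
   with D i = v i / 2 - c i strictly decreasing.  Abel summation gives
     y^T (D (minn j k)) y = D 0 (sum y)^2 - sum_m (D m - D m.+1) (sum_(j > m) y j)^2,
   which is negative when y <> 0 and sum y = 0; so the game is conditionally
   negative definite, and then any symmetric Nash equilibrium is an ESS and
   the only one.  A Nash equilibrium is built by backward induction on its
   support {m, ..., n}: column m is constant below the diagonal, with a
   larger value than on it, so putting weight on strategy m shifts the
   payoffs of m.+1, ..., n uniformly and can be tuned to make m a best reply.
   Finally payoffA is payoffB with rho = 0. *)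

Section MinKernel.
Variables (R : realFieldType) (n : nat) (D : nat -> R) (y : 'I_n.+1 -> R).

Definition tail_sum (m : nat) : R := \sum_(j < n.+1 | (m <= j)%N) y j.

Lemma tail_sum_gt (m : nat) : (n < m)%N -> tail_sum m = 0.
Proof.
move=> lt_nm; rewrite /tail_sum big_pred0 // => j.
by rewrite leqNgt (leq_trans (ltn_ord j)).
Qed.

Lemma tail_sumS (j : 'I_n.+1) : y j = tail_sum j - tail_sum j.+1.
Proof.
rewrite /tail_sum (bigD1 j) //= -addrA.
suff -> : \sum_(k < n.+1 | (j <= k)%N && (k != j)) y k = \sum_(k < n.+1 | (j < k)%N) y k.
  by rewrite subrr addr0.
by apply: eq_bigl => k; rewrite -val_eqE /= ltn_neqAle eq_sym andbC.
Qed.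

Lemma min_kernel_telescope (i : nat) : (i <= n)%N ->
  D i = D 0 - \sum_(m < n) (D m - D m.+1) * (m < i)%:R.
Proof.
move=> le_in; under eq_bigr do rewrite mulr_natr mulrb.
rewrite -big_mkcond /= -(big_mkord (fun m => m < i)%N (fun m => D m - D m.+1)).
have -> : \sum_(0 <= m < n | (m < i)%N) (D m - D m.+1) = \sum_(0 <= m < i) (D m - D m.+1).
  by rewrite (big_nat_widen _ _ _ _ _ le_in).
rewrite (@telescope_sumr_eq _ 0 i (fun k => - D k)) // => [|k _]; first ring.
by rewrite opprK addrC.
Qed.

Lemma min_kernel_quad_form :
  \sum_j \sum_k y j * y k * D (minn j k) =
  D 0 * (\sum_j y j) ^+ 2 - \sum_(m < n) (D m - D m.+1) * tail_sum m.+1 ^+ 2.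
Proof.
have tail_sum_sq m : tail_sum m.+1 ^+ 2 =
    \sum_(j < n.+1) \sum_(k < n.+1) ((m < j)%:R * y j) * ((m < k)%:R * y k).
  by rewrite expr2 /tail_sum !big_mkcond big_distrlr; do 2!apply: eq_bigr => ? _;
    rewrite !mulr_natl !mulrb.
transitivity (\sum_(j < n.+1) \sum_(k < n.+1) (D 0 * (y j * y k) -
    \sum_(m < n) (D m - D m.+1) * (((m < j)%:R * y j) * ((m < k)%:R * y k)))).
  apply: eq_bigr => j _; apply: eq_bigr => k _.
  rewrite (@min_kernel_telescope (minn j k)) ?geq_min ?leq_ord // mulrBr mulr_sumr.
  congr (_ - _); first ring.
  by apply: eq_bigr => m _; rewrite leq_min -mulnb natrM; ring.
under eq_bigr do rewrite sumrB; rewrite sumrB; congr (_ - _).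
  rewrite expr2 mulr_suml mulr_sumr; apply: eq_bigr => j _.
  by rewrite !mulr_sumr.
under eq_bigr do rewrite exchange_big; rewrite exchange_big /=.
apply: eq_bigr => m _; rewrite tail_sum_sq mulr_sumr.
by apply: eq_bigr => j _; rewrite mulr_sumr.
Qed.

Lemma tail_sum_neq0 (j : 'I_n.+1) : \sum_k y k = 0 -> y j != 0 ->
  exists m : 'I_n, tail_sum m.+1 != 0.
Proof.
move=> sum0 yj_neq0.
have [/existsP //|/existsPn tail0] := boolP [exists m : 'I_n, tail_sum m.+1 != 0].
have {}tail0 m : tail_sum m = 0.
  case: (ltnP n m) => [/tail_sum_gt //|]; case: m => [_|m lt_mn]; first exact: sum0.
  exact/eqP/negPn/(tail0 (Ordinal lt_mn)).
by move: yj_neq0; rewrite tail_sumS !tail0 subrr eqxx.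
Qed.

Lemma min_kernel_quad_form_lt0 (j : 'I_n.+1) :
  (forall m, (m < n)%N -> D m.+1 < D m) -> \sum_k y k = 0 -> y j != 0 ->
  \sum_j \sum_k y j * y k * D (minn j k) < 0.
Proof.
move=> D_decr sum0 yj_neq0; have [m tail_neq0] := tail_sum_neq0 sum0 yj_neq0.
rewrite min_kernel_quad_form sum0 expr0n mulr0 sub0r oppr_lt0 (bigD1 m) //=.
apply: ltr_pwDl; last first.
  by apply: sumr_ge0 => i _; rewrite mulr_ge0 ?sqr_ge0 ?subr_ge0 ?ltW ?D_decr.
by rewrite mulr_gt0 ?subr_gt0 ?D_decr // exprn_even_gt0.
Qed.
End MinKernel.

Section Bilinear.
Variables (R : realType) (n : nat).
Implicit Types (p q y : 'cV[R]_n.+1) (M : 'M[R]_n.+1).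

Lemma bil_sum p M q : bil p M q = \sum_j \sum_k p j 0 * M j k * q k 0.
Proof.
rewrite /bil -mulmxA mxE; apply: eq_bigr => j _.
by rewrite !mxE mulr_sumr; apply: eq_bigr => k _; rewrite mulrA.
Qed.

Lemma bil_mulmx p M q : bil p M q = \sum_j p j 0 * (M *m q) j 0.
Proof. by rewrite /bil -mulmxA mxE; apply: eq_bigr => j _; rewrite mxE. Qed.

Lemma bil_subr p q M :
  bil (q - p) M (q - p) = bil q M q - bil q M p - bil p M q + bil p M p.
Proof. by rewrite /bil !mulmxBr linearB /= !mulmxBl !mxE; ring. Qed.

Lemma bil_symmetric_part y M :
  2 * bil y M y = \sum_j \sum_k y j 0 * y k 0 * (M j k + M k j).
Proof.
rewrite mulr_natl mulr2n {2}bil_sum exchange_big bil_sum -big_split.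
apply: eq_bigr => j _; rewrite -big_split; apply: eq_bigr => k _ /=; ring.
Qed.

End Bilinear.

Lemma cond_neg_def_min_kernel (R : realType) (n : nat) (M : 'M[R]_n.+1)
    (D : nat -> R) (rho : 'I_n.+1 -> R) :
  (forall j k, M j k + M k j = 2 * (D (minn j k) - (j == k)%:R * rho j)) ->
  (forall m, (m < n)%N -> D m.+1 < D m) -> (forall k, 0 <= rho k) ->
  cond_neg_def M.
Proof.
move=> M_sym D_decr rho_ge0 y y_neq0 sum0.
have [/existsP[j0 yj_neq0]|/existsPn y0] := boolP [exists j, y j 0 != 0]; last first.
  by case/negP: y_neq0; apply/eqP/matrixP => j i; rewrite ord1 mxE; apply/eqP/negPn.
have := min_kernel_quad_form_lt0 D_decr sum0 yj_neq0.
suff : 2 * bil y M y <= 2 * \sum_j \sum_k y j 0 * y k 0 * D (minn j k) by lra.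
(* Only the diagonal terms differ, by -2 rho j * y j 0 ^+ 2 <= 0. *)
rewrite bil_symmetric_part mulr_sumr; apply: ler_sum => j _.
rewrite mulr_sumr; apply: ler_sum => k _; rewrite M_sym.
case: eqP => [<-|_]; last by rewrite mul0r subr0; lra.
by rewrite mul1r; have := rho_ge0 j; have := sqr_ge0 (y j 0); nra.
Qed.

Section Equilibria.
Variables (R : realType) (n : nat) (M : 'M[R]_n.+1).
Implicit Types (p q : 'cV[R]_n.+1).

Definition is_nash p : Prop :=
  mixed_strategy p /\ forall q, mixed_strategy q -> bil q M p <= bil p M p.

Lemma mixed_strategy_sum_subr p q :
  mixed_strategy p -> mixed_strategy q -> \sum_j (q - p) j 0 = 0.
Proof.
move=> [_ sum_p] [_ sum_q]; under eq_bigr do rewrite !mxE.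
by rewrite sumrB sum_p sum_q subrr.
Qed.

Hypothesis M_cnd : cond_neg_def M.

Lemma cond_neg_def_nash_ESS p : is_nash p -> is_ESS M p.
Proof.
move=> [mp p_nash]; do 2!split=> //; move=> q mq /eqP q_neq_p eq_qp.
have := M_cnd (y := q - p); rewrite subr_eq0 bil_subr.
move=> /(_ q_neq_p (mixed_strategy_sum_subr mp mq)).
lra.
Qed.

Lemma cond_neg_def_nash_unique p q : is_nash p -> is_nash q -> q = p.
Proof.
move=> [mp p_nash] [mq q_nash]; apply/eqP; apply: contraT => q_neq_p.
have := M_cnd (y := q - p); rewrite subr_eq0 bil_subr.
move=> /(_ q_neq_p (mixed_strategy_sum_subr mp mq)).
by have := p_nash q mq; have := q_nash p mp; lra.
Qed.

Lemma cond_neg_def_unique_ESS : (exists p, is_nash p) -> exists! p, is_ESS M p.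
Proof.
move=> [p p_nash]; exists p; split; first exact: cond_neg_def_nash_ESS.
by move=> q [mq [q_nash _]]; apply: cond_neg_def_nash_unique.
Qed.

End Equilibria.

Lemma nash_of_best_replies (R : realType) (n : nat) (M : 'M[R]_n.+1) p (u : R) :
  mixed_strategy p -> (forall k, (M *m p) k 0 <= u) ->
  (forall k, p k 0 != 0 -> (M *m p) k 0 = u) -> is_nash M p.
Proof.
move=> mp le_u supp_u; have [p_01 sum_p] := mp.
have pMp_u : bil p M p = u.
  rewrite bil_mulmx -[u]mul1r -sum_p mulr_suml; apply: eq_bigr => k _.
  by have [->|/supp_u ->] := eqVneq (p k 0) 0; rewrite ?mul0r.
split=> // q [q_01 sum_q]; rewrite pMp_u bil_mulmx -[u]mul1r -sum_q mulr_suml.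
by apply: ler_sum => k _; rewrite ler_wpM2l //; case/andP: (q_01 k).
Qed.

Lemma mixed_strategy_normalize (R : realType) (n : nat) (x : 'cV[R]_n.+1) :
  (forall k, 0 <= x k 0) -> 0 < \sum_k x k 0 ->
  mixed_strategy ((\sum_k x k 0)^-1 *: x).
Proof.
move=> x_ge0 sum_gt0; split.
  move=> k; rewrite mxE mulr_ge0 ?invr_ge0 ?(ltW sum_gt0) //= ler_pdivrMl // mulr1.
  by rewrite (bigD1 k) //= lerDl sumr_ge0.
under eq_bigr do rewrite mxE; by rewrite -mulr_sumr mulVf ?gt_eqF.
Qed.

Lemma exists_nonneg_mul_ge (R : realFieldType) (a b : R) : 0 < b ->
  exists t, [/\ 0 <= t, a <= t * b & t != 0 -> t * b = a].
Proof.
move=> b_gt0; have [a_ge0|a_lt0] := lerP 0 a.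
  by exists (a / b); rewrite divfK ?(gt_eqF b_gt0) // divr_ge0 // ltW.
by exists 0; rewrite mul0r eqxx; split=> //; apply: ltW.
Qed.

Section NashExistence.
Variables (R : realType) (n : nat) (M : 'M[R]_n.+1).
Hypothesis M_col_below : forall j k : 'I_n.+1, (j < k)%N -> M k j = M ord_max j.
Hypothesis M_diag_lt : forall j : 'I_n.+1, (j < n)%N -> M j j < M ord_max j.

(* x is an unnormalised symmetric equilibrium of the game restricted to the
   strategies m, ..., n. *)
Definition tail_equalizer (m : nat) (x : 'cV[R]_n.+1) :=
  [/\ x ord_max 0 = 1, forall k, 0 <= x k 0,
      forall k : 'I_n.+1, (k < m)%N -> x k 0 = 0,
      forall k : 'I_n.+1, (m <= k)%N -> (M *m x) k 0 <= (M *m x) ord_max 0 &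
      forall k, x k 0 != 0 -> (M *m x) k 0 = (M *m x) ord_max 0].

Lemma tail_equalizer_max : tail_equalizer n (delta_mx ord_max 0).
Proof.
have le_max (k : 'I_n.+1) : (n <= k)%N -> k = ord_max.
  by move=> le_nk; apply/val_inj/eqP; rewrite eqn_leq le_nk -ltnS ltn_ord.
rewrite /tail_equalizer -colE.
split=> [|k|k|k /le_max ->|k] //; rewrite !mxE ?eqxx ?ler0n //.
  by move=> lt_kn; rewrite andbT -val_eqE /= ltn_eqF.
by rewrite andbT; have [->|_] := eqVneq k ord_max; rewrite ?eqxx.
Qed.

Lemma mulmx_add_delta (x : 'cV[R]_n.+1) (t : R) (j k : 'I_n.+1) :
  (M *m (x + t *: delta_mx j 0)) k 0 = (M *m x) k 0 + t * M k j.
Proof. by rewrite mulmxDr -scalemxAr -colE !mxE. Qed.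

Lemma tail_equalizer_pred (m : nat) (x : 'cV[R]_n.+1) : (m < n)%N ->
  tail_equalizer m.+1 x -> exists x', tail_equalizer m x'.
Proof.
move=> lt_mn [x_max x_ge0 x_head x_tail x_supp].
pose j : 'I_n.+1 := inord m; have val_j : j = m :> nat by rewrite inordK // leqW.
pose a := (M *m x) j 0 - (M *m x) ord_max 0.
have [|t [t_ge0 a_le_tb tb_eq_a]] := @exists_nonneg_mul_ge _ a (M ord_max j - M j j).
  by rewrite subr_gt0 M_diag_lt // val_j.
have xj0 : x j 0 = 0 by apply: x_head; rewrite val_j.
have col_j (k : 'I_n.+1) : (m < k)%N -> M k j = M ord_max j.
  by move=> lt_mk; apply: M_col_below; rewrite val_j.
have lt_mk (k : 'I_n.+1) : (m <= k)%N -> k != j -> (m < k)%N.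
  by move=> le_mk; rewrite -val_eqE /= val_j ltn_neqAle le_mk andbT eq_sym.
have x'E k : (x + t *: delta_mx j 0) k 0 = x k 0 + t * (k == j)%:R.
  by rewrite !mxE andbT.
exists (x + t *: delta_mx j 0); split=> [|k|k lt_km|k le_mk|k].
- by rewrite x'E -val_eqE /= val_j gtn_eqF // mulr0 addr0.
- by rewrite x'E addr_ge0 ?mulr_ge0.
- by rewrite x'E -val_eqE /= val_j ltn_eqF // mulr0 addr0 x_head // ltnW.
- rewrite !mulmx_add_delta; have [->|k_neq_j] := eqVneq k j.
    by rewrite /a in a_le_tb; lra.
  by rewrite col_j ?lt_mk // lerD2r x_tail ?lt_mk.
- rewrite x'E !mulmx_add_delta; have [->|k_neq_j] := eqVneq k j.
    by rewrite xj0 mulr1 add0r => /tb_eq_a; rewrite /a; lra.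
  rewrite mulr0 addr0 => xk_neq0; rewrite x_supp // col_j //.
  by rewrite ltnNge; apply: contra xk_neq0 => le_km; apply/eqP/x_head.
Qed.

Lemma exists_tail_equalizer0 : exists x, tail_equalizer 0 x.
Proof.
suff tail_eq i : (i <= n)%N -> exists x, tail_equalizer (n - i) x.
  by have := tail_eq n (leqnn n); rewrite subnn.
elim: i => [|i IHi] le_in.
  by rewrite subn0; exists (delta_mx ord_max 0); apply: tail_equalizer_max.
have [x] := IHi (ltnW le_in); rewrite (_ : n - i = (n - i.+1).+1)%N; last by lia.
by apply: tail_equalizer_pred; lia.
Qed.

Lemma exists_nash : exists p, is_nash M p.
Proof.
have [x [x_max x_ge0 _ x_tail x_supp]] := exists_tail_equalizer0.
have sum_gt0 : 0 < \sum_k x k 0.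
  by rewrite (bigD1 ord_max) //= x_max ltr_pwDl ?sumr_ge0.
exists ((\sum_k x k 0)^-1 *: x).
apply: (nash_of_best_replies (u := (\sum_k x k 0)^-1 * (M *m x) ord_max 0)).
- exact: mixed_strategy_normalize.
- by move=> k; rewrite -scalemxAr mxE ler_wpM2l ?invr_ge0 ?(ltW sum_gt0) ?x_tail.
- by move=> k; rewrite -scalemxAr 2!mxE mulf_eq0 negb_or => /andP[_ /x_supp ->].
Qed.

End NashExistence.

Section Payoffs.
Variables (R : realType) (n : nat) (c v rho : 'I_n.+1 -> R).
Hypothesis c_incr : forall j k : 'I_n.+1, (j < k)%N -> c j < c k.
Hypothesis v_decr : forall j k : 'I_n.+1, (j <= k)%N -> v k <= v j.
Hypothesis v_gt0 : forall k, 0 < v k.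
Hypothesis rho_ge0 : forall k, 0 <= rho k.

Definition payoffA_diag (i : nat) : R := v (inord i) / 2 - c (inord i).

Lemma payoffA_diag_decr m : (m < n)%N -> payoffA_diag m.+1 < payoffA_diag m.
Proof.
move=> lt_mn; rewrite /payoffA_diag.
have v_le : v (inord m.+1) <= v (inord m) by apply: v_decr; rewrite !inordK // leqW.
have c_lt : c (inord m) < c (inord m.+1) by apply: c_incr; rewrite !inordK // leqW.
lra.
Qed.

Lemma payoffB_symmetric_part j k :
  payoffB c v rho j k + payoffB c v rho k j =
  2 * (payoffA_diag (minn j k) - (j == k)%:R * rho j).
Proof.
rewrite /payoffA_diag !mxE [k == j]eq_sym; have [<-|neq_jk] := eqVneq j k.
  by rewrite ltnn minnn inord_val /=; field.
case: ltngtP => [_|_|/val_inj eq_jk]; last by rewrite eq_jk eqxx in neq_jk.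
all: by rewrite inord_val /=; field.
Qed.

Lemma payoffB_col_below (j k : 'I_n.+1) :
  (j < k)%N -> payoffB c v rho k j = payoffB c v rho ord_max j.
Proof. by move=> lt_jk; rewrite !mxE lt_jk (leq_trans lt_jk) // -ltnS. Qed.

Lemma payoffB_diag_lt (j : 'I_n.+1) :
  (j < n)%N -> payoffB c v rho j j < payoffB c v rho ord_max j.
Proof.
by move=> lt_jn; rewrite !mxE ltnn eqxx lt_jn; have := v_gt0 j; have := rho_ge0 j; lra.
Qed.

Lemma payoffB_unique_ESS_cond_neg_def :
  (exists! p, is_ESS (payoffB c v rho) p) /\ cond_neg_def (payoffB c v rho).
Proof.
have cnd : cond_neg_def (payoffB c v rho).
  exact: cond_neg_def_min_kernel payoffB_symmetric_part payoffA_diag_decr rho_ge0.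
split=> //; apply: cond_neg_def_unique_ESS => //.
exact: exists_nash payoffB_col_below payoffB_diag_lt.
Qed.

End Payoffs.

Lemma payoffA_payoffB (R : realType) (n : nat) (c v : 'I_n.+1 -> R) :
  payoffA c v = payoffB c v (fun _ => 0).
Proof. by apply/matrixP => j k; rewrite !mxE subr0. Qed.

Theorem lemma5p1 (R : realType) (n : nat) (c v rho : 'I_(n.+1) -> R) :
  (1 <= n)%N ->
  0 <= c ord0 ->
  (forall j k : 'I_(n.+1), (j < k)%N -> c j < c k) ->
  (forall j k : 'I_(n.+1), (j <= k)%N -> v k <= v j) ->
  0 < v ord_max ->
  (forall k, 0 <= rho k /\ rho k < v k / 2) ->
  ((exists! p, is_ESS (payoffA c v) p) /\ cond_neg_def (payoffA c v)) /\
  ((exists! p, is_ESS (payoffB c v rho) p) /\ cond_neg_def (payoffB c v rho)).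
Proof.
move=> _ _ c_incr v_decr v_max_gt0 rho_bounds.
have v_gt0 k : 0 < v k by apply: lt_le_trans v_max_gt0 (v_decr _ _ _); rewrite -ltnS.
rewrite payoffA_payoffB; split; apply: payoffB_unique_ESS_cond_neg_def => // k.
by case: (rho_bounds k).
Qed.
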